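(* Let $a,b$ be Laurent polynomials with symmetry types $\mathrm{S}a(z)=\epsilon_az^{c_a}$ and $\mathrm{S}b(z)=\epsilon_bz^{c_b}$ ($\epsilon_a,\epsilon_b\in\{\pm1\}$, $c_a,c_b\in\mathbb Z$). Suppose $b\neq0$ and $\mathrm{len}(a)>\mathrm{len}(b)$. Then there exists a Laurent polynomial $q_1$ with symmetry such that $a_1(z):=a(z)-b(z)q_1(z)$ satisfies $\mathrm{len}(a_1)<\mathrm{len}(a)$ and $\mathrm{S}a_1(z)=\mathrm{S}a(z)=\mathrm{S}b(z)\,\mathrm{S}q_1(z)$.
   Context: Laurent polynomial $u(z)=\sum_ku(k)z^k$ with finitely many nonzero complex coefficients. $u$ has symmetry of type $\epsilon z^c$ if $u(z)=\epsilon z^cu(z^{-1})$; for nonzero $u$, $\mathrm{S}u(z):=u(z)/u(z^{-1})$; the zero polynomial has symmetry of every type. For nonzero $u$, $\mathrm{len}(u):=\max\{k:u(k)\ne0\}-\min\{k:u(k)\neq0\}$, and $\mathrm{len}(0):=-\infty$. *)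

(* Laurent polynomials with coefficients in R[i]
   (complex numbers over a real closed field R; R = the real numbers is an
   instance), represented as finitely supported functions int -> R[i]. *)
From HB Require Import structures.
From mathcomp Require Import all_boot all_order all_algebra.
From mathcomp Require Import finmap.
From mathcomp.real_closed Require Import complex.
Set Implicit Arguments. Unset Strict Implicit. Unset Printing Implicit Defensive.
Import Order.TTheory GRing.Theory Num.Theory.
Local Open Scope fset_scope.
Local Open Scope ring_scope.

Section Laurent.
Variable R : rcfType.
Local Notation C := (complex R).

Definition laurent := {fsfun int -> C with 0}.

Definition lnonzero (u : laurent) : Prop := exists k : int, u k != 0.

(* product (convolution): (u v)(k) = sum_i u(i) v(k-i); the coefficient
   vanishes outside { i + j | i in supp u, j in supp v }. *)
Definition lmul (u v : laurent) : laurent :=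
  [fsfun k in [fset (i + j)%R | i in finsupp u, j in finsupp v] =>
     \sum_(i <- finsupp u) u i * v (k - i) | 0].

Definition lsub (u v : laurent) : laurent :=
  [fsfun k in finsupp u `|` finsupp v => u k - v k | 0].

(* u has symmetry of type eps z^c :  u(z) = eps z^c u(z^{-1}),
   i.e. coefficientwise  u(k) = eps * u(c - k). *)
Definition lsym (u : laurent) (eps : C) (c : int) : Prop :=
  forall k : int, u k = eps * u (c - k).

(* len u = max supp - min supp for u <> 0, and None (= -oo) for u = 0 *)
Definition len (u : laurent) : option nat :=
  match enum_fset (finsupp u) with
  | [::] => None
  | x :: s => Some `|foldr Num.max x s - foldr Num.min x s|%N
  end.

End Laurent.

Definition ltlen (x y : option nat) : bool :=
  match x, y with
  | _, None => false
  | None, Some _ => true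
  | Some m, Some n => (m < n)%N
  end.

From HB Require Import structures.
From mathcomp Require Import all_boot all_order all_algebra.
From mathcomp Require Import finmap.
From mathcomp.real_closed Require Import complex.
From mathcomp Require Import zify ring.
Set Implicit Arguments. Unset Strict Implicit.
Import Order.TTheory GRing.Theory Num.Theory.
Local Open Scope ring_scope.

(* Let [ma, Ma] and [mb, Mb] be the smallest intervals containing the supports
   of a and b, and take q1 = x z^(Ma-Mb) + eq x z^(ma-mb) with x = a(Ma)/b(Mb)
   and eq = ea eb.  Then q1 is symmetric of type eq z^(Ma-Mb+ma-mb), so b q1,
   and with it a1 = a - b q1, has the symmetry type ea z^ca of a.  Since
   len b < len a gives ma-mb < Ma-Mb, the top coefficient of b q1 is a(Ma), so
   a1 vanishes from Ma upward; by its symmetry about ca = ma + Ma it also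
   vanishes from ma downward, hence len a1 < Ma - ma = len a. *)

Lemma foldr_sel_mem (T : eqType) (op : T -> T -> T) x s :
  (forall a b, op a b = a \/ op a b = b) -> foldr op x s \in x :: s.
Proof.
move=> op_sel; elim: s => [|y s IH] /=; first by rewrite inE.
have [->|->] := op_sel y (foldr op x s); first by rewrite !inE eqxx orbT.
by move: IH; rewrite !inE => /orP[] ->; rewrite ?orbT.
Qed.

Lemma foldr_max_mem d (T : orderType d) (x : T) s :
  foldr Order.max x s \in x :: s.
Proof. by apply: foldr_sel_mem => a b; rewrite maxEle; case: ifP; [right|left]. Qed.

Lemma foldr_min_mem d (T : orderType d) (x : T) s :
  foldr Order.min x s \in x :: s.
Proof. by apply: foldr_sel_mem => a b; rewrite minEle; case: ifP; [left|right]. Qed.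

Lemma foldr_min_le_max d (T : orderType d) (x : T) s y :
  y \in x :: s -> (foldr Order.min x s <= y <= foldr Order.max x s)%O.
Proof.
rewrite !foldrE inE => /predU1P[->|ys]; first by rewrite bigmin_le_id bigmax_ge_id.
by rewrite ge_bigmin_seq ?le_bigmax_seq.
Qed.

Lemma pm1_sqr (R : ringType) (e : R) : (e == 1) || (e == -1) -> e * e = 1.
Proof. by case/orP=> /eqP->; rewrite ?mulrNN mulr1. Qed.

Lemma pm1_mul (R : ringType) (e f : R) :
  (e == 1) || (e == -1) -> (f == 1) || (f == -1) -> (e * f == 1) || (e * f == -1).
Proof. by case/orP=> /eqP-> /orP[]/eqP->; rewrite ?mul1r ?mulN1r ?opprK eqxx ?orbT. Qed.

Lemma sqr1_neq0 (R : nzRingType) (e : R) : e * e = 1 -> e != 0.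
Proof. by move=> e2; apply: contra_eq_neq e2 => ->; rewrite mul0r eq_sym oner_neq0. Qed.

Section LaurentCoefficients.
Variable R : rcfType.
Local Notation C := (complex R).
Implicit Types (u v a b : laurent R) (k m M : int).

Lemma len_support u : lnonzero u -> exists m M,
  [/\ len u = Some `|M - m|%N, u m != 0, u M != 0 &
      forall k, u k != 0 -> m <= k <= M].
Proof.
move=> [k0 uk0]; rewrite /len.
have suppE k : (u k != 0) = (k \in enum_fset (finsupp u)) by rewrite -mem_finsupp.
case E: (enum_fset (finsupp u)) => [|x s]; first by move: uk0; rewrite suppE E.
exists (foldr Num.min x s), (foldr Num.max x s).
split=> //; rewrite ?suppE ?E ?foldr_min_mem ?foldr_max_mem // => k.
by rewrite suppE E; apply: foldr_min_le_max.
Qed.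

Lemma ltlen_len_open u (lo hi : int) :
  (forall k, u k != 0 -> lo < k < hi) -> ltlen (len u) (Some `|hi - lo|%N).
Proof.
move=> inside; rewrite {1}/len; case E: (enum_fset (finsupp u)) => [//|x s].
have ux : lnonzero u.
  by exists x; rewrite -mem_finsupp -[_ \in _]/(x \in enum_fset (finsupp u)) E mem_head.
have [m [M [+ um uM _]]] := len_support ux; rewrite /len E => -[->].
by have := inside _ um; have := inside _ uM; rewrite /=; lia.
Qed.

Lemma coef_eq0_gt u M k : (forall j, u j != 0 -> j <= M) -> M < k -> u k = 0.
Proof. by move=> ub; rewrite ltNge; apply: contraNeq; apply: ub. Qed.

Lemma lsubE u v k : lsub u v k = u k - v k.
Proof.
rewrite /lsub fsfunE inE !mem_finsupp; case: ifP => // /norP[].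
by rewrite !negbK => /eqP-> /eqP->; rewrite subrr.
Qed.

Lemma lmulE u v k : lmul u v k = \sum_(i <- finsupp u) u i * v (k - i).
Proof.
rewrite /lmul fsfunE; case: ifP => // kNsupp; rewrite big_seq big1 // => i iu.
have [->|vki] := eqVneq (v (k - i)) 0; first by rewrite mulr0.
case/negP: kNsupp; apply/imfset2P; exists i => //; exists (k - i).
  by rewrite mem_finsupp.
by rewrite addrC subrK.
Qed.

Lemma sum_finsupp_delta u j : \sum_(i <- finsupp u) u i * (i == j)%:R = u j.
Proof.
have [ju|juN] := boolP (j \in finsupp u).
  rewrite (bigD1_seq j ju (fset_uniq _)) /= eqxx mulr1 big1 ?addr0 //.
  by move=> i /negPf->; rewrite mulr0.
rewrite big_seq big1; last first.
  by move=> i iu; case: eqP iu => [->|_]; rewrite ?(negPf juN) ?mulr0.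
by move: juN; rewrite memNfinsupp => /eqP.
Qed.

Lemma lsym_coef_eq0 u e c k : e != 0 -> lsym u e c -> (u (c - k) == 0) = (u k == 0).
Proof. by move=> e0 su; rewrite [u k]su mulf_eq0 (negPf e0). Qed.

Lemma lsym_center u e c m M : e != 0 -> lsym u e c -> u m != 0 -> u M != 0 ->
  (forall k, u k != 0 -> m <= k <= M) -> c = m + M.
Proof.
move=> e0 su um uM supp.
have := supp (c - m); have := supp (c - M).
by rewrite !(lsym_coef_eq0 _ e0 su) => /(_ uM) + /(_ um); lia.
Qed.

Lemma lsym_coef_eq0_le u e c M :
  lsym u e c -> (forall k, M <= k -> u k = 0) -> forall k, k <= c - M -> u k = 0.
Proof. by move=> su top k le_k; rewrite su top ?mulr0 //; lia. Qed.

Lemma lsym_lsub u v e c : lsym u e c -> lsym v e c -> lsym (lsub u v) e c.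
Proof. by move=> su sv k; rewrite !lsubE su sv mulrBr. Qed.

Lemma lsym_lmul u v eu ev cu cv : eu != 0 ->
  lsym u eu cu -> lsym v ev cv -> lsym (lmul u v) (eu * ev) (cu + cv).
Proof.
move=> eu0 su sv k; rewrite !lmulE mulr_sumr.
have reflect_supp : perm_eq (finsupp u) [seq cu - i | i <- finsupp u].
  apply: uniq_perm; rewrite ?map_inj_in_uniq ?fset_uniq //; first by move=> i j _ _; lia.
  move=> i; rewrite !mem_finsupp; apply/idP/mapP => [ui|[j + ->]].
    exists (cu - i); last by rewrite opprB addrC subrK.
    by rewrite mem_finsupp (lsym_coef_eq0 _ eu0 su).
  by rewrite mem_finsupp (lsym_coef_eq0 _ eu0 su).
rewrite [RHS](perm_big _ reflect_supp) big_map; apply: eq_bigr => i _.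
rewrite [u i]su [v (k - i)]sv.
have -> : cu + cv - k - (cu - i) = cv - (k - i) by ring.
by rewrite mulrACA.
Qed.

Definition lbinomial (d e : int) (x y : C) : laurent R :=
  [fsfun k in [fset d; e]%fset => (k == d)%:R * x + (k == e)%:R * y | 0].

Lemma lbinomialE d e x y k : lbinomial d e x y k = (k == d)%:R * x + (k == e)%:R * y.
Proof.
rewrite fsfunE in_fset2; case: ifP => // /norP[/negPf-> /negPf->].
by rewrite !mul0r addr0.
Qed.

Lemma lmul_lbinomialE u d e x y k :
  lmul u (lbinomial d e x y) k = u (k - d) * x + u (k - e) * y.
Proof.
rewrite lmulE; under eq_bigr => i _ do rewrite lbinomialE mulrDr !mulrA.
rewrite big_split /= -!mulr_suml -!sum_finsupp_delta.
have flip j i : (k - i == j) = (i == k - j) by apply/eqP/eqP; lia.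
by congr (_ * _ + _ * _); apply: eq_bigr => i _; rewrite flip.
Qed.

Lemma lsym_lbinomial d e x (s : C) :
  s * s = 1 -> lsym (lbinomial d e x (s * x)) s (d + e).
Proof.
move=> s2 k; rewrite !lbinomialE.
have -> : (d + e - k == d) = (k == e) by apply/eqP/eqP; lia.
have -> : (d + e - k == e) = (k == d) by apply/eqP/eqP; lia.
rewrite mulrDr addrC; congr (_ + _); first exact: mulrCA.
by rewrite mulrCA [s * (s * x)]mulrA s2 mul1r.
Qed.

Lemma lsub_lmul_lbinomial_top a b (Ma Mb e : int) y :
  (forall k, a k != 0 -> k <= Ma) -> (forall k, b k != 0 -> k <= Mb) ->
  b Mb != 0 -> e < Ma - Mb ->
  forall k, Ma <= k -> lsub a (lmul b (lbinomial (Ma - Mb) e (a Ma / b Mb) y)) k = 0.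
Proof.
move=> ub_a ub_b bMb0 lt_ed k le_Mk; rewrite lsubE lmul_lbinomialE.
rewrite [b (k - e)](coef_eq0_gt ub_b); last by lia.
rewrite mul0r addr0; case: (eqVneq k Ma) => [->|neq_kM].
  have -> : Ma - (Ma - Mb) = Mb by ring.
  by rewrite mulrC divfK // subrr.
by rewrite (coef_eq0_gt ub_a) ?[b (k - _)](coef_eq0_gt ub_b) ?mul0r ?subrr //; lia.
Qed.

End LaurentCoefficients.

Theorem lemma3p5 (R : rcfType) (a b : laurent R) (ea eb : complex R) (ca cb : int) :
  (ea == 1) || (ea == -1) -> (eb == 1) || (eb == -1) ->
  lnonzero a -> lsym a ea ca ->
  lnonzero b -> lsym b eb cb ->
  ltlen (len b) (len a) ->
  exists (q1 : laurent R) (eq : complex R) (cq : int),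
    [/\ lnonzero q1, (eq == 1) || (eq == -1), lsym q1 eq cq,
        ltlen (len (lsub a (lmul b q1))) (len a)
        /\ lsym (lsub a (lmul b q1)) ea ca
      & ea = eb * eq /\ ca = cb + cq].
Proof.
move=> ea_pm1 eb_pm1 a_nz sa b_nz sb.
have [ma [Ma [-> ama aMa supp_a]]] := len_support a_nz.
have [mb [Mb [-> bmb bMb supp_b]]] := len_support b_nz.
rewrite /= => lt_len.
have ca_E := lsym_center (sqr1_neq0 (pm1_sqr ea_pm1)) sa ama aMa supp_a.
have cb_E := lsym_center (sqr1_neq0 (pm1_sqr eb_pm1)) sb bmb bMb supp_b.
have lt_ed : ma - mb < Ma - Mb by have := supp_a _ ama; have := supp_b _ bmb; lia.
pose eq := ea * eb; pose x := a Ma / b Mb; pose cq := Ma - Mb + (ma - mb).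
have eq_pm1 : (eq == 1) || (eq == -1) by apply: pm1_mul.
pose q1 := lbinomial (Ma - Mb) (ma - mb) x (eq * x).
have sq1 : lsym q1 eq cq by apply/lsym_lbinomial/pm1_sqr.
have ea_E : ea = eb * eq by rewrite /eq mulrCA pm1_sqr ?mulr1.
have sa1 : lsym (lsub a (lmul b q1)) ea ca.
  apply: lsym_lsub => //; have -> : ca = cb + cq by rewrite /cq; lia.
  by rewrite ea_E; apply: lsym_lmul; rewrite // sqr1_neq0 ?pm1_sqr.
have ub_a k : a k != 0 -> k <= Ma by move/supp_a/andP=> [].
have ub_b k : b k != 0 -> k <= Mb by move/supp_b/andP=> [].
have top := lsub_lmul_lbinomial_top (eq * x) ub_a ub_b bMb lt_ed.
exists q1, eq, cq; split=> //.
- exists (Ma - Mb); rewrite lbinomialE eqxx (gt_eqF lt_ed) mul0r addr0 mul1r.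
  by rewrite mulf_neq0 ?invr_eq0.
- split=> //; apply: ltlen_len_open => k; apply: contraR.
  rewrite negb_and -!leNgt => /orP[le_km|le_Mk]; apply/eqP; last exact: top.
  by apply: (lsym_coef_eq0_le sa1 top); lia.
- by split=> //; rewrite /cq; lia.
Qed.
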